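(* Suppose $\mathbf{X}=\mathbf{D}_1\boldsymbol{\Gamma}_1$, $\boldsymbol{\Gamma}_{i-1}=\mathbf{D}_i\boldsymbol{\Gamma}_i$ for $2\le i\le K$, all $\boldsymbol{\Gamma}_i\ne0$, and $\mathbf{Y}=\mathbf{X}+\mathbf{E}$ with $\|\mathbf{E}\|_{2,\infty}^{p}\le\epsilon_0$. Let $|\Gamma_i^{\min}|,|\Gamma_i^{\max}|$ be the smallest and largest absolute values of the nonzero entries of $\boldsymbol{\Gamma}_i$. Let $\hat{\boldsymbol{\Gamma}}_0=\mathbf{Y}$ and $\hat{\boldsymbol{\Gamma}}_i=\mathcal{H}_{\beta_i}(\mathbf{D}_i^T\hat{\boldsymbol{\Gamma}}_{i-1})$ for $1\le i\le K$ (layered hard thresholding). Define recursively $$\epsilon_i=\sqrt{\|\boldsymbol{\Gamma}_i\|_{0,\infty}^{p}}\,\big(\epsilon_{i-1}+\mu(\mathbf{D}_i)(\|\boldsymbol{\Gamma}_i\|_{0,\infty}^{s}-1)|\Gamma_i^{\max}|\big).$$ Assume that for all $1\le i\le K$: (a) $\|\boldsymbol{\Gamma}_i\|_{0,\infty}^{s}<\tfrac12\Big(1+\tfrac{1}{\mu(\mathbf{D}_i)}\tfrac{|\Gamma_i^{\min}|}{|\Gamma_i^{\max}|}\Big)-\tfrac{1}{\mu(\mathbf{D}_i)}\tfrac{\epsilon_{i-1}}{|\Gamma_i^{\max}|}$; and (b) $|\Gamma_i^{\min}|-(\|\boldsymbol{\Gamma}_i\|_{0,\infty}^{s}-1)\mu(\mathbf{D}_i)|\Gamma_i^{\max}|-\epsilon_{i-1}>\beta_i>\|\boldsymbol{\Gamma}_i\|_{0,\infty}^{s}\mu(\mathbf{D}_i)|\Gamma_i^{\max}|+\epsilon_{i-1}$.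 Then for all $1\le i\le K$: (1) the support of $\hat{\boldsymbol{\Gamma}}_i$ equals that of $\boldsymbol{\Gamma}_i$; and (2) $\|\boldsymbol{\Gamma}_i-\hat{\boldsymbol{\Gamma}}_i\|_{2,\infty}^{p}\le\epsilon_i$.
   Context: Setting. Signals are one-dimensional of length $N$ with periodic boundary conditions; $m_0=1$, $\boldsymbol{\Gamma}_0=\mathbf{X}$. For $i\ge1$, $\boldsymbol{\Gamma}_i\in\mathbb{R}^{Nm_i}$ has entry $km_i+r$ equal to the coefficient of filter $r$ at spatial shift $k$. $\mathbf{D}_i\in\mathbb{R}^{Nm_{i-1}\times Nm_i}$ is a (stride) convolutional dictionary whose column $km_i+r$ is local filter $r$ (length $n_{i-1}m_{i-1}$) placed cyclically on entries $km_{i-1},\dots,km_{i-1}+n_{i-1}m_{i-1}-1$, zero elsewhere. Columns have unit $\ell_2$ norm; $\mu(\mathbf{D})=\max_{i\neq j}|\mathbf{d}_i^T\mathbf{d}_j|$. Stripes: $\mathbf{S}_{i,j}\boldsymbol{\Gamma}_i$ is the subvector of $\boldsymbol{\Gamma}_i$ at spatial shifts $k\in\{j-n_{i-1}+1,\dots,j+n_{i-1}-1\}$ (mod $N$), all channels; $\|\boldsymbol{\Gamma}_i\|_{0,\infty}^{s}=\max_j\|\mathbf{S}_{i,j}\boldsymbol{\Gamma}_i\|_0$. Patches: for $i\ge0$, $\mathbf{P}_{i,j}\mathbf{V}$ extracts from $\mathbf{V}\in\mathbb{R}^{Nm_i}$ the cyclically contiguous subvector at spatial shifts $j,\dots,j+n_i-1$,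 all channels (length $n_im_i$); $\|\mathbf{V}\|_{2,\infty}^{p}=\max_j\|\mathbf{P}_{i,j}\mathbf{V}\|_2$, $\|\mathbf{V}\|_{0,\infty}^{p}=\max_j\|\mathbf{P}_{i,j}\mathbf{V}\|_0$. For the last layer $\boldsymbol{\Gamma}_K$, the patch size $n_K$ is an arbitrary fixed choice. Hard thresholding: $\mathcal{H}_\beta$ acts entrywise, $\mathcal{H}_\beta(z)=z$ if $|z|>\beta$ and $0$ otherwise. *)

(* R is an arbitrary real closed field (rcfType), which
   covers the real numbers; only algebraic operations (incl. sqrt) are used. *)
From HB Require Import structures.
From mathcomp Require Import all_boot all_order all_algebra.
Set Implicit Arguments. Unset Strict Implicit. Unset Printing Implicit Defensive.
Import Order.TTheory GRing.Theory Num.Theory.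
Local Open Scope ring_scope.

Definition HT (R : numDomainType) (b : R) (p : nat) (v : 'cV[R]_p) : 'cV[R]_p :=
  map_mx (fun z => if b < `|z| then z else 0) v.

(* Entry (a, c) of a (stride) convolutional dictionary of size
   N*mp x N*mc, built from local filters f r (length np*mp):
   column c = k*mc + r is filter r placed cyclically on rows
   k*mp, ..., k*mp + np*mp - 1 (mod N*mp), zero elsewhere. *)
Definition conv_entry (R : numDomainType) (N mp np mc : nat)
  (f : nat -> nat -> R) (a c : nat) : R :=
  let k := (c %/ mc)%N in
  let r := (c %% mc)%N in
  let t := ((a + N * mp - (k * mp) %% (N * mp)) %% (N * mp))%N in
  if (t < np * mp)%N then f r t else 0.

Definition is_conv_dict (R : numDomainType) (N mp np mc : nat)
  (D : 'M[R]_(N * mp, N * mc)) : Prop :=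
  exists f : nat -> nat -> R, forall a c, D a c = conv_entry N mp np mc f a c.

Definition unit_cols (R : numDomainType) (p q : nat) (D : 'M[R]_(p, q)) : Prop :=
  forall c : 'I_q, \sum_(a < p) D a c ^+ 2 = 1.

Definition mutual_coherence (R : realDomainType) (p q : nat) (D : 'M[R]_(p, q)) : R :=
  \big[Num.max/0]_(a < q) \big[Num.max/0]_(b < q | b != a)
     `| \sum_(r < p) D r a * D r b |.

(* spatial shift k lies in stripe j: k in {j-np+1, ..., j+np-1} (mod N) *)
Definition in_stripe (N np j k : nat) : bool :=
  [exists d : 'I_((2 * np).-1), ((k + np.-1) %% N == (j + d) %% N)%N].

(* ||G||_{0,inf}^s  (np = n_{i-1}, mc = m_i) *)
Definition stripe_l0 (R : numDomainType) (N np mc : nat) (G : 'cV[R]_(N * mc)) : nat :=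
  \max_(j < N) #|[set c : 'I_(N * mc) | (G c ord0 != 0%R) && in_stripe N np j (c %/ mc)]|.

(* index c (= k*mc + r) belongs to patch j: k in {j, ..., j+nc-1} (mod N) *)
Definition in_patch (N nc mc j c : nat) : bool :=
  [exists s : 'I_nc, (c %/ mc == (j + s) %% N)%N].

Definition patch_l0 (R : numDomainType) (N nc mc : nat) (G : 'cV[R]_(N * mc)) : nat :=
  \max_(j < N) #|[set c : 'I_(N * mc) | (G c ord0 != 0%R) && in_patch N nc mc j c]|.

Definition patch_l2 (R : rcfType) (N nc mc : nat) (G : 'cV[R]_(N * mc)) : R :=
  \big[Num.max/0]_(j < N)
     Num.sqrt (\sum_(c < N * mc | in_patch N nc mc j c) G c ord0 ^+ 2).

Definition gmax (R : realDomainType) (p : nat) (G : 'cV[R]_p) : R :=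
  \big[Num.max/0]_(c < p) `|G c ord0|.
Definition gmin (R : realDomainType) (p : nat) (G : 'cV[R]_p) : R :=
  \big[Num.min/gmax G]_(c < p | G c ord0 != 0%R) `|G c ord0|.

Definition supp (R : numDomainType) (p : nat) (G : 'cV[R]_p) : {set 'I_p} :=
  [set c | G c ord0 != 0].

Arguments is_conv_dict {R} N mp np mc D.
Arguments stripe_l0 {R} N np mc G.
Arguments patch_l0 {R} N nc mc G.
Arguments patch_l2 {R} N nc mc G.

From HB Require Import structures.
From mathcomp Require Import all_boot all_order all_algebra zify ring lra.
Import Order.TTheory GRing.Theory Num.Theory.
Local Open Scope ring_scope.

(* Write D^T Y = G + (D^T D - I) G + D^T (Y - D G).  An entry of (D^T D - I) G
   only involves the nonzeros of G in the stripe around the entry (the other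
   atoms do not overlap), each weighted by at most mu(D), and an atom lives in
   one patch, so by Cauchy-Schwarz the noise term is bounded by the patch norm
   of Y - D G.  Hence every entry of D^T Y is within (s - 1) mu |G^max| + eps
   of G on the support of G and below s mu |G^max| + eps off it; a threshold
   beta between these levels recovers the support exactly, and the entrywise
   error, summed over a patch containing at most ||G||_{0,inf}^p nonzeros,
   gives the next eps. *)

Lemma ltn_divn_mul {N mc c : nat} : (c < N * mc)%N -> (c %/ mc < N)%N.
Proof. by case: mc => [|mc]; [rewrite muln0 | rewrite ltn_divLR]. Qed.

Lemma modn_mul_addr_small (N x mp t : nat) : (t < mp)%N ->
  ((x * mp + t) %% (N * mp) = x %% N * mp + t)%N.
Proof.
move=> ltt; case: N => [|N]; first by rewrite !modn0.
rewrite {1}(divn_eq x N.+1) mulnDl -mulnA -addnA modnMDl modn_small //.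
have : (x %% N.+1 < N.+1)%N by rewrite ltn_mod.
nia.
Qed.

Lemma conv_entry_neq0_shift {R : numDomainType} {N mp np mc : nat}
    {f : nat -> nat -> R} {a c : nat} :
  (a < N * mp)%N -> (c %/ mc < N)%N -> conv_entry N mp np mc f a c != 0 ->
  exists2 u, (u < np)%N & (a %/ mp = (c %/ mc + u) %% N)%N.
Proof.
rewrite /conv_entry => lta ltk; set k := (c %/ mc)%N in ltk *.
have mp_gt0 : (0 < mp)%N by case: mp lta => //; rewrite muln0.
have ltkN : (k * mp < N * mp)%N by rewrite ltn_pmul2r.
rewrite (modn_small ltkN); set t := ((a + N * mp - k * mp) %% (N * mp))%N.
case: ifP => [ltt _|]; last by rewrite eqxx.
exists (t %/ mp)%N; first by rewrite ltn_divLR.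
have a_eq : ((t + k * mp) %% (N * mp) = a)%N.
  by rewrite /t modnDml subnK ?modnDr ?modn_small //; lia.
have t_eq : (t + k * mp = (t %/ mp + k) * mp + t %% mp)%N.
  by rewrite {1}(divn_eq t mp) mulnDl; lia.
have ltr : (t %% mp < mp)%N by rewrite ltn_mod.
by rewrite -a_eq t_eq modn_mul_addr_small // divnMDl // (divn_small ltr) addn0 addnC.
Qed.

Lemma in_stripe_of_common_shift {N np k k' u u' : nat} :
  (u < np)%N -> (u' < np)%N -> ((k + u) %% N = (k' + u') %% N)%N ->
  in_stripe N np k k'.
Proof.
move=> ltu ltu' eq_shift; apply/existsP.
have ltd : (np.-1 + u - u' < (2 * np).-1)%N by lia.
exists (Ordinal ltd) => /=.
have -> : (k + (np.-1 + u - u') = k + u + (np.-1 - u'))%N by lia.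
apply/eqP; rewrite -(modnDml (k + u)) eq_shift modnDml; congr (_ %% _)%N; lia.
Qed.

Lemma in_stripe_refl (N np k : nat) : (0 < np)%N -> in_stripe N np k k.
Proof. by move=> np_gt0; apply: (@in_stripe_of_common_shift _ _ _ _ 0 0). Qed.

Lemma sqr_sum_mul_le_unit {R : rcfType} {I : finType} {P : pred I} {x : I -> R}
    (y : I -> R) :
  \sum_(i | P i) x i ^+ 2 = 1 ->
  (\sum_(i | P i) x i * y i) ^+ 2 <= \sum_(i | P i) y i ^+ 2.
Proof.
move=> unit_x; set l := \sum_(i | P i) x i * y i.
have : 0 <= \sum_(i | P i) (y i - l * x i) ^+ 2.
  by apply: sumr_ge0 => i _; exact: sqr_ge0.
have -> : \sum_(i | P i) (y i - l * x i) ^+ 2 =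
    \sum_(i | P i) y i ^+ 2 - (l * 2) * l + l ^+ 2 * \sum_(i | P i) x i ^+ 2.
  rewrite /l mulr_sumr mulr_sumr -!sumrN -!big_split /=.
  by apply: eq_bigr => i _; rewrite -/l; ring.
rewrite unit_x; lra.
Qed.

Lemma coherence_ge0 (R : realDomainType) (p q : nat) (D : 'M[R]_(p, q)) :
  0 <= mutual_coherence D.
Proof. exact: bigmax_ge_id. Qed.

Lemma col_dot_le_coherence (R : realDomainType) (p q : nat) (D : 'M[R]_(p, q))
    (c c' : 'I_q) :
  c' != c -> `|\sum_r D r c * D r c'| <= mutual_coherence D.
Proof.
move=> neq_c; apply: le_trans (le_bigmax _ _ c).
exact: (le_bigmax_cond _ (fun b : 'I_q => `|\sum_r D r c * D r b|) neq_c).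
Qed.

Lemma gmax_ge0 (R : realDomainType) (p : nat) (G : 'cV[R]_p) : 0 <= gmax G.
Proof. exact: bigmax_ge_id. Qed.

Lemma le_gmax (R : realDomainType) (p : nat) (G : 'cV[R]_p) c : `|G c ord0| <= gmax G.
Proof. exact: (le_bigmax _ (fun c : 'I_p => `|G c ord0|)). Qed.

Lemma gmin_le {R : realDomainType} {p : nat} {G : 'cV[R]_p} {c} :
  G c ord0 != 0 -> gmin G <= `|G c ord0|.
Proof. exact: (bigmin_le_cond _ (fun c : 'I_p => `|G c ord0|)). Qed.

Lemma patch_l2_ge0 (R : rcfType) (N nc mc : nat) (G : 'cV[R]_(N * mc)) :
  0 <= patch_l2 N nc mc G.
Proof. exact: bigmax_ge_id. Qed.

Lemma patch_l2_distC (R : rcfType) (N nc mc : nat) (A B : 'cV[R]_(N * mc)) :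
  patch_l2 N nc mc (A - B) = patch_l2 N nc mc (B - A).
Proof.
apply: eq_bigr => j _; congr Num.sqrt; apply: eq_bigr => c _.
by rewrite !mxE -opprB sqrrN.
Qed.

Lemma patch_l2_le_sqrt_patch_l0 (R : rcfType) (N nc mc : nat)
    (G V : 'cV[R]_(N * mc)) (b : R) :
  0 <= b -> (forall c, G c ord0 = 0 -> V c ord0 = 0) ->
  (forall c, `|V c ord0| <= b) ->
  patch_l2 N nc mc V <= Num.sqrt (patch_l0 N nc mc G)%:R * b.
Proof.
move=> b_ge0 suppV leVb.
apply: bigmax_le => [|j _]; first by rewrite mulr_ge0 ?sqrtr_ge0.
set A := [set c | (G c ord0 != 0) && in_patch N nc mc j c].
have cardA : (#|A| <= patch_l0 N nc mc G)%N.
  exact: (leq_bigmax (F := fun j : 'I_N =>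
    #|[set c : 'I_(N * mc) | (G c ord0 != 0) && in_patch N nc mc j c]|)).
rewrite -(ger0_norm b_ge0) -sqrtr_sqr -sqrtrM //; apply: ler_wsqrtr.
apply: (@le_trans _ _ (\sum_(c in A) b ^+ 2)); last first.
  rewrite sumr_const -[_ *+ #|A|]mulr_natl.
  by apply: ler_wpM2r; [exact: sqr_ge0 | rewrite ler_nat].
rewrite big_mkcond [X in _ <= X]big_mkcond /=; apply: ler_sum => c _.
rewrite inE andbC; case: in_patch => //=; have [Gc0|_] := eqVneq (G c ord0) 0.
  by rewrite suppV // expr0n.
by rewrite -real_normK ?num_real // lerXn2r ?nnegrE.
Qed.

Section ConvDictionary.
Local Set Implicit Arguments.
Local Unset Strict Implicit.

Variables (R : rcfType) (N mp np mc : nat) (D : 'M[R]_(N * mp, N * mc)).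
Hypotheses (convD : is_conv_dict N mp np mc D) (unitD : unit_cols D).

Definition stripe_supp (G : 'cV[R]_(N * mc)) (c : 'I_(N * mc)) : {set 'I_(N * mc)} :=
  [set c' | (G c' ord0 != 0) && in_stripe N np (c %/ mc) (c' %/ mc)].

Lemma card_stripe_supp (G : 'cV[R]_(N * mc)) c :
  (#|stripe_supp G c| <= stripe_l0 N np mc G)%N.
Proof.
rewrite /stripe_supp /stripe_l0.
exact: (leq_bigmax (F := fun j : 'I_N => #|[set c' : 'I_(N * mc) |
  (G c' ord0 != 0) && in_stripe N np j (c' %/ mc)]|)
  (Ordinal (ltn_divn_mul (ltn_ord c)))).
Qed.

Lemma conv_dict_neq0_shift a c : D a c != 0 ->
  exists2 u, (u < np)%N & (a %/ mp = (c %/ mc + u) %% N)%N.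
Proof.
have [f Df] := convD; rewrite Df.
exact: conv_entry_neq0_shift (ltn_ord a) (ltn_divn_mul (ltn_ord c)).
Qed.

Lemma conv_col_dot_eq0 (c c' : 'I_(N * mc)) :
  ~~ in_stripe N np (c %/ mc) (c' %/ mc) -> \sum_a D a c * D a c' = 0.
Proof.
move=> not_stripe; apply: big1 => a _.
have [->|/conv_dict_neq0_shift[u ltu eq_a]] := eqVneq (D a c) 0; first by rewrite mul0r.
have [->|/conv_dict_neq0_shift[u' ltu' eq_a']] := eqVneq (D a c') 0.
  by rewrite mulr0.
by rewrite (in_stripe_of_common_shift ltu ltu') -?eq_a -?eq_a' in not_stripe.
Qed.

Lemma conv_col_dot_le_patch_l2 (Y : 'cV[R]_(N * mp)) c :
  `|\sum_a D a c * Y a ord0| <= patch_l2 N np mp Y.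
Proof.
have ltk := ltn_divn_mul (ltn_ord c).
set S := in_patch N np mp (c %/ mc).
have D_out : forall a : 'I_(N * mp), ~~ S a -> D a c = 0.
  move=> a; apply: contraNeq => /conv_dict_neq0_shift[u ltu eq_a].
  by apply/existsP; exists (Ordinal ltu); rewrite /= eq_a.
have restrict (F : 'I_(N * mp) -> R) : (forall a, D a c = 0 -> F a = 0) ->
    \sum_a F a = \sum_(a < N * mp | S a) F a.
  move=> F0; rewrite [RHS]big_mkcond; apply: eq_bigr => a _.
  by case: ifP => // Sa; rewrite F0 // D_out ?Sa.
rewrite restrict => [|a ->]; last by rewrite mul0r.
have unit_S : \sum_(a < N * mp | S a) D a c ^+ 2 = 1.
  by rewrite -(unitD c) (restrict (fun a => D a c ^+ 2)) // => a ->; rewrite expr0n.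
rewrite -sqrtr_sqr.
apply: le_trans (ler_wsqrtr (sqr_sum_mul_le_unit (fun a => Y a ord0) unit_S)) _.
exact: (le_bigmax _ (fun j : 'I_N =>
  Num.sqrt (\sum_(a < N * mp | in_patch N np mp j a) Y a ord0 ^+ 2)) (Ordinal ltk)).
Qed.

Lemma mulTmx_entry (G : 'cV[R]_(N * mc)) (Y : 'cV[R]_(N * mp)) c :
  (D^T *m Y) c ord0 = G c ord0
     + \sum_(c' | c' != c) (\sum_a D a c * D a c') * G c' ord0
     + \sum_a D a c * (Y - D *m G) a ord0.
Proof.
rewrite -{1}(subrK (D *m G) Y) mulmxDr addrC mulmxA !mxE (bigD1 c) //= mxE.
have -> : \sum_j D^T c j * D j c = 1.
  by rewrite -(unitD c); apply: eq_bigr => a _; rewrite mxE -expr2.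
rewrite mul1r; congr (_ + _ + _).
  apply: eq_bigr => c' _; rewrite mxE; congr (_ * _).
  by apply: eq_bigr => a _; rewrite mxE.
by apply: eq_bigr => a _; rewrite mxE.
Qed.

Lemma mulTmx_entry_err (G : 'cV[R]_(N * mc)) (Y : 'cV[R]_(N * mp)) c :
  `|(D^T *m Y) c ord0 - G c ord0| <=
    #|stripe_supp G c :\ c|%:R * (mutual_coherence D * gmax G)
    + patch_l2 N np mp (Y - D *m G).
Proof.
rewrite (mulTmx_entry G) addrAC [_ - G c ord0]addrAC subrr add0r.
apply: le_trans (ler_normD _ _) _; rewrite lerD ?conv_col_dot_le_patch_l2 //.
apply: le_trans (ler_norm_sum _ _ _) _.
rewrite mulr_natl -sumr_const big_mkcond [X in _ <= X]big_mkcond /=.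
apply: ler_sum => c' _; rewrite !inE.
have [->|neq_c] := eqVneq c' c; first by [].
have [->|_] := eqVneq (G c' ord0) 0; first by rewrite mulr0 normr0.
case: ifP => [_|/negbT/conv_col_dot_eq0->]; last by rewrite mul0r normr0.
by rewrite normrM ler_pM ?col_dot_le_coherence ?le_gmax.
Qed.

Lemma mulTmx_entry_err_supp (G : 'cV[R]_(N * mc)) (Y : 'cV[R]_(N * mp)) c :
  (0 < np)%N -> G c ord0 != 0 ->
  `|(D^T *m Y) c ord0 - G c ord0| <=
    ((stripe_l0 N np mc G)%:R - 1) * (mutual_coherence D * gmax G)
    + patch_l2 N np mp (Y - D *m G).
Proof.
move=> np_gt0 Gc_neq0; apply: le_trans (mulTmx_entry_err G Y c) _.
rewrite lerD // ler_wpM2r ?mulr_ge0 ?coherence_ge0 ?gmax_ge0 //.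
have c_in : c \in stripe_supp G c by rewrite inE Gc_neq0 in_stripe_refl.
have := card_stripe_supp G c; rewrite (cardsD1 c) c_in add1n.
by rewrite lerBrDr -(natrD _ _ 1%N) ler_nat addn1.
Qed.

Lemma mulTmx_entry_off_supp (G : 'cV[R]_(N * mc)) (Y : 'cV[R]_(N * mp)) c :
  G c ord0 = 0 ->
  `|(D^T *m Y) c ord0| <=
    (stripe_l0 N np mc G)%:R * (mutual_coherence D * gmax G)
    + patch_l2 N np mp (Y - D *m G).
Proof.
move=> Gc0; have := mulTmx_entry_err G Y c; rewrite Gc0 subr0 => /le_trans; apply.
rewrite lerD // ler_wpM2r ?mulr_ge0 ?coherence_ge0 ?gmax_ge0 // ler_nat.
exact: leq_trans (subset_leq_card (subsetDl _ _)) (card_stripe_supp G c).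
Qed.

End ConvDictionary.

Section ThresholdingLayer.
Local Set Implicit Arguments.
Local Unset Strict Implicit.

Variables (R : rcfType) (N mp np mc nc : nat) (D : 'M[R]_(N * mp, N * mc)).
Variables (G : 'cV[R]_(N * mc)) (Y : 'cV[R]_(N * mp)) (beta e : R).
Hypotheses (np_gt0 : (0 < np)%N) (convD : is_conv_dict N mp np mc D)
  (unitD : unit_cols D) (G_neq0 : G != 0)
  (err_Y : patch_l2 N np mp (Y - D *m G) <= e).

Let s := (stripe_l0 N np mc G)%:R : R.
Let mu := mutual_coherence D.

Hypotheses (beta_lt : beta < gmin G - (s - 1) * mu * gmax G - e)
  (beta_gt : s * mu * gmax G + e < beta).

Let err_supp c : G c ord0 != 0 ->
  `|(D^T *m Y) c ord0 - G c ord0| <= (s - 1) * (mu * gmax G) + e.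
Proof.
move=> Gc_neq0; apply: le_trans (mulTmx_entry_err_supp convD unitD Y np_gt0 Gc_neq0) _.
exact: lerD.
Qed.

Let beta_lt_supp c : G c ord0 != 0 -> beta < `|(D^T *m Y) c ord0|.
Proof.
move=> Gc_neq0; have err := err_supp Gc_neq0; have min_le := gmin_le Gc_neq0.
have tri : `|G c ord0| <= `|(D^T *m Y) c ord0| + `|(D^T *m Y) c ord0 - G c ord0|.
  by rewrite distrC (le_trans _ (ler_normD _ _)) // addrC subrK.
move: beta_lt; lra.
Qed.

Lemma HT_mulTmx_entry c :
  HT beta (D^T *m Y) c ord0 = if G c ord0 != 0 then (D^T *m Y) c ord0 else 0.
Proof.
rewrite mxE; have [Gc0|/beta_lt_supp->] //= := eqVneq (G c ord0) 0.
case: ifP => // beta_lt_v.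
have := le_trans (mulTmx_entry_off_supp convD unitD Y Gc0) (lerD (lexx _) err_Y).
rewrite -/s -/mu; move: beta_gt beta_lt_v; lra.
Qed.

Lemma supp_HT_mulTmx : supp (HT beta (D^T *m Y)) = supp G.
Proof.
have beta_ge0 : 0 <= beta.
  apply: le_trans (ltW beta_gt); apply: addr_ge0.
    by rewrite !mulr_ge0 ?coherence_ge0 ?gmax_ge0.
  by rewrite (le_trans _ err_Y) ?patch_l2_ge0.
apply/setP => c; rewrite !inE HT_mulTmx_entry.
case: ifP => [/beta_lt_supp beta_lt_v|_]; last by rewrite eqxx.
by rewrite -normr_gt0 (le_lt_trans beta_ge0).
Qed.

Lemma patch_l2_HT_mulTmx_err :
  patch_l2 N nc mc (G - HT beta (D^T *m Y))
    <= Num.sqrt (patch_l0 N nc mc G)%:R * (e + mu * (s - 1) * gmax G).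
Proof.
have err c : `|(G - HT beta (D^T *m Y)) c ord0| <= e + mu * (s - 1) * gmax G
    \/ G c ord0 = 0.
  rewrite 2!mxE HT_mulTmx_entry; have [|Gc_neq0] := eqVneq (G c ord0) 0; first by right.
  by left; rewrite distrC (le_trans (err_supp Gc_neq0)) // addrC mulrCA mulrA.
have [c Gc_neq0] : exists c, G c ord0 != 0.
  apply/existsP; apply: contraNT G_neq0; rewrite negb_exists => /forallP G0.
  by apply/eqP/matrixP => i j; rewrite (ord1 j) mxE; apply/eqP/negbNE.
have b_ge0 : 0 <= e + mu * (s - 1) * gmax G.
  by case: (err c) => [/(le_trans (normr_ge0 _))//|/eqP]; rewrite (negbTE Gc_neq0).
apply: patch_l2_le_sqrt_patch_l0 => // [c' Gc'0|c'].
  by rewrite 2!mxE HT_mulTmx_entry Gc'0 eqxx subrr.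
by case: (err c') => // Gc'0; rewrite 2!mxE HT_mulTmx_entry Gc'0 eqxx subrr normr0.
Qed.

End ThresholdingLayer.

Theorem theorem3 (R : rcfType) (N K : nat) (m n : nat -> nat)
  (D : forall i : nat, 'M[R]_(N * m i.-1, N * m i))
  (Gamma : forall i : nat, 'cV[R]_(N * m i))
  (E : 'cV[R]_(N * m 0%N))
  (Ghat : forall i : nat, 'cV[R]_(N * m i))
  (beta eps : nat -> R) (eps0 : R) :
  m 0%N = 1%N ->
  (forall i, (i <= K)%N -> (0 < n i <= N)%N) ->
  (forall i, (1 <= i <= K)%N ->
     is_conv_dict N (m i.-1) (n i.-1) (m i) (D i) /\ unit_cols (D i)) ->
  (forall i, (1 <= i <= K)%N -> Gamma i.-1 = D i *m Gamma i) ->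
  (forall i, (1 <= i <= K)%N -> Gamma i != 0) ->
  patch_l2 N (n 0%N) (m 0%N) E <= eps0 ->
  Ghat 0%N = Gamma 0%N + E ->
  (forall i, (1 <= i <= K)%N -> Ghat i = HT (beta i) ((D i)^T *m Ghat i.-1)) ->
  eps 0%N = eps0 ->
  (forall i, (1 <= i <= K)%N ->
     eps i = Num.sqrt ((patch_l0 N (n i) (m i) (Gamma i))%:R)
             * (eps i.-1 + mutual_coherence (D i)
                  * ((stripe_l0 N (n i.-1) (m i) (Gamma i))%:R - 1)
                  * gmax (Gamma i))) ->
  (forall i, (1 <= i <= K)%N ->
     (stripe_l0 N (n i.-1) (m i) (Gamma i))%:R
       < 2^-1 * (1 + (mutual_coherence (D i))^-1 * (gmin (Gamma i) / gmax (Gamma i)))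
         - (mutual_coherence (D i))^-1 * (eps i.-1 / gmax (Gamma i))) ->
  (forall i, (1 <= i <= K)%N ->
     gmin (Gamma i)
       - ((stripe_l0 N (n i.-1) (m i) (Gamma i))%:R - 1)
         * mutual_coherence (D i) * gmax (Gamma i) - eps i.-1 > beta i
     /\ beta i > (stripe_l0 N (n i.-1) (m i) (Gamma i))%:R
                 * mutual_coherence (D i) * gmax (Gamma i) + eps i.-1) ->
  forall i, (1 <= i <= K)%N ->
    supp (Ghat i) = supp (Gamma i)
    /\ patch_l2 N (n i) (m i) (Gamma i - Ghat i) <= eps i.
Proof.
move=> _ n_pos dictD GammaD Gamma_neq0 noise Ghat0 GhatD eps_0 epsD _ beta_bounds.
have layer i : (1 <= i <= K)%N ->
    patch_l2 N (n i.-1) (m i.-1) (Ghat i.-1 - Gamma i.-1) <= eps i.-1 ->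
    supp (Ghat i) = supp (Gamma i)
    /\ patch_l2 N (n i) (m i) (Gamma i - Ghat i) <= eps i.
  move=> iK err; have [convDi unitDi] := dictD i iK.
  have [beta_lt beta_gt] := beta_bounds i iK.
  have np_gt0 : (0 < n i.-1)%N.
    by case/andP: (n_pos i.-1 (leq_trans (leq_pred i) (proj2 (andP iK)))).
  rewrite (GammaD i iK) in err.
  rewrite GhatD // epsD //; split.
    exact: supp_HT_mulTmx np_gt0 convDi unitDi err beta_lt beta_gt.
  exact: patch_l2_HT_mulTmx_err np_gt0 convDi unitDi (Gamma_neq0 i iK) err
    beta_lt beta_gt.
have err i : (i <= K)%N -> patch_l2 N (n i) (m i) (Ghat i - Gamma i) <= eps i.
  elim: i => [_|i IH iK]; first by rewrite Ghat0 eps_0 addrC addKr.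
  by rewrite patch_l2_distC; apply: (layer i.+1 _ (IH (ltnW iK))).2; rewrite iK.
move=> i /andP[i_ge1 iK]; apply: layer; first by rewrite i_ge1.
exact: err (leq_trans (leq_pred i) iK).
Qed.
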